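(* Let $\mathbb B=\mathbb{F}_2^4$ and let $\circ$ be an alternative operation on $\mathbb B$. Let $g_1,g_2\in\mathrm{GL}(\mathbb B,+)$ and $f\in\mathrm{Sym}(\mathbb B)$. Then for any $g_1'\in g_1H_\circ$ and any $g_2'\in H_\circ g_2$ one has $\delta^\circ_{g_2fg_1}=\delta^\circ_{g_2'fg_1'}$.
   Context: Maps are written in postfix notation: $xf$ is the image of $x$, and $fg$ means first $f$, then $g$. An alternative operation on $\mathbb B$ is defined from an elementary abelian $2$-subgroup $T<\mathrm{AGL}(\mathbb B,+)$ acting regularly: with $\tau_a$ the unique element of $T$ with $0\tau_a=a$, $a\circ b:=a\tau_b$; $\mathrm{AGL}(\mathbb B,\circ)$ is the normaliser of $T$ in $\mathrm{Sym}(\mathbb B)$ and $\mathrm{GL}(\mathbb B,\circ)$ its stabiliser of $0$; $H_\circ:=\mathrm{GL}(\mathbb B,+)\cap\mathrm{GL}(\mathbb B,\circ)$. For $f\in\mathrm{Sym}(\mathbb B)$, $\delta^\circ_f(a,b)=\#\{x\in\mathbb B: xf\circ(x\circ a)f=b\}$ and the $\circ$-differential uniformity is $\delta^\circ_f=\max_{a\neq0,\,b}\delta^\circ_f(a,b)$. *)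

From HB Require Import structures.
From mathcomp Require Import all_boot all_order all_algebra all_fingroup all_solvable.
Set Implicit Arguments. Unset Strict Implicit. Unset Printing Implicit Defensive.
Import GRing.Theory.

(* The space B = F_2^4, as row vectors (maps act on the right: x *m A). *)
Definition B := 'rV['F_2]_4.

(* Permutations of B compose in postfix order in MathComp:
   (s * t) x = t (s x), so the permutation product s * t is "first s, then t",
   matching the paper's convention. *)

Local Open Scope ring_scope.

Definition AGL_plus : {set {perm B}} :=
  [set t : {perm B} | [exists A : 'M['F_2]_4, [exists v : B,
      (A \in unitmx) && [forall x : B, t x == x *m A + v]]]].

Definition GL_plus : {set {perm B}} :=
  [set t : {perm B} | [exists A : 'M['F_2]_4,
      (A \in unitmx) && [forall x : B, t x == x *m A]]].

Definition regular (T : {set {perm B}}) : Prop :=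
  forall a b : B, exists! t : {perm B}, t \in T /\ t a = b.

(* tau_b : the element of T sending 0 to b (unique when T is regular). *)
Definition tau (T : {set {perm B}}) (b : B) : option {perm B} :=
  [pick t in T | t 0 == b].

Definition circ (T : {set {perm B}}) (a b : B) : B :=
  match tau T b with Some t => t a | None => a end.

(* GL(B,o): stabiliser of 0 in AGL(B,o) = N_{Sym(B)}(T). *)
Definition GL_circ (T : {set {perm B}}) : {set {perm B}} :=
  ('N(T) :&: [set h : {perm B} | h 0 == 0])%g.

Definition H_circ (T : {set {perm B}}) : {set {perm B}} :=
  (GL_plus :&: GL_circ T)%g.

Definition delta_ab (T : {set {perm B}}) (f : {perm B}) (a b : B) : nat :=
  #|[set x : B | circ T (f x) (f (circ T x a)) == b]|.

Definition delta (T : {set {perm B}}) (f : {perm B}) : nat :=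
  \max_(a : B | a != 0) \max_(b : B) delta_ab T f a b.

From HB Require Import structures.
From mathcomp Require Import all_boot all_order all_algebra all_fingroup all_solvable.
Set Implicit Arguments. Unset Strict Implicit. Unset Printing Implicit Defensive.
Local Open Scope ring_scope.

(* Every h in GL(B,o) is an automorphism of (B,o): conjugating tau_b by h gives
   the element of T sending 0 to bh, i.e. tau_(bh).  Hence x |-> xh maps the
   solutions of delta_(hf)(a, b) onto those of delta_f(ah, b), while
   delta_(fh)(a, b) = delta_f(a, b h^-1); since h fixes 0, both reindexings
   leave the maxima defining delta^o unchanged. *)

Section GLCircInvariance.

Variable T : {group {perm B}}.
Hypothesis T_regular : regular T.

Lemma circ_tau (t : {perm B}) (a : B) : t \in T -> circ T a (t 0) = t a.
Proof.
move=> tT; rewrite /circ /tau.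
case: pickP => [u /andP[uT /eqP u0] | /(_ t)]; last by rewrite tT eqxx.
have [v [_ v_uniq]] := T_regular 0 (t 0).
by rewrite -(v_uniq u (conj uT u0)) (v_uniq t (conj tT erefl)).
Qed.

Lemma GL_circ_fix0 (h : {perm B}) : h \in GL_circ T -> h 0 = 0.
Proof. by rewrite !inE => /andP[_ /eqP]. Qed.

Lemma circ_GL_circ (h : {perm B}) (a b : B) :
  h \in GL_circ T -> circ T (h a) (h b) = h (circ T a b).
Proof.
move=> hGL; have hN : h \in ('N(T))%g by move: hGL; rewrite inE => /andP[].
have [t [[tT <-] _]] := T_regular 0 b.
have hV0 : (h^-1)%g 0 = 0 by rewrite -{1}(GL_circ_fix0 hGL) permK.
have -> : h (t 0) = (t ^ h)%g 0 by rewrite conjgE !permM hV0.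
by rewrite !circ_tau ?memJ_norm // conjgE !permM permK.
Qed.

Lemma delta_ab_mulr (h F : {perm B}) (a b : B) :
  h \in GL_circ T -> delta_ab T (F * h)%g a b = delta_ab T F a ((h^-1)%g b).
Proof.
move=> hGL; apply: eq_card => x.
by rewrite !inE !permM circ_GL_circ // -(canF_eq (permK h)).
Qed.

Lemma delta_ab_mull (h F : {perm B}) (a b : B) :
  h \in GL_circ T -> delta_ab T (h * F)%g a b = delta_ab T F (h a) b.
Proof.
move=> hGL; rewrite -[RHS](card_preimset _ (@perm_inj _ h)).
by apply: eq_card => x; rewrite !inE !permM (circ_GL_circ x a hGL).
Qed.

Lemma delta_mulr (h F : {perm B}) : h \in GL_circ T -> delta T (F * h)%g = delta T F.
Proof.
move=> hGL; apply: eq_bigr => a _; rewrite (reindex_inj (@perm_inj _ h)) /=.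
by apply: eq_bigr => b _; rewrite delta_ab_mulr // permK.
Qed.

Lemma delta_mull (h F : {perm B}) : h \in GL_circ T -> delta T (h * F)%g = delta T F.
Proof.
move=> hGL; rewrite /delta [RHS](reindex_inj (@perm_inj _ h)) /=.
apply: eq_big => [a | a _].
  by rewrite -[in RHS](GL_circ_fix0 hGL) (inj_eq (@perm_inj _ h)).
by apply: eq_bigr => b _; rewrite delta_ab_mull.
Qed.

End GLCircInvariance.

Theorem proposition4 (T : {group {perm B}})
  (hT_abelem : (2.-abelem T)%g) (hT_reg : regular T) (hT_aff : (T \subset AGL_plus)%g)
  (g1 g2 f : {perm B}) (hg1 : g1 \in GL_plus) (hg2 : g2 \in GL_plus)
  (g1' g2' : {perm B})
  (hg1' : g1' \in (g1 *: H_circ T)%g) (hg2' : g2' \in (H_circ T :* g2)%g) :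
  delta T (g2 * f * g1)%g = delta T (g2' * f * g1')%g.
Proof.
have /setIP[_ left_GL] : (g2' * g2^-1)%g \in H_circ T by rewrite -mem_rcoset.
have /setIP[_ right_GL] : (g1^-1 * g1')%g \in H_circ T by rewrite -mem_lcoset.
have -> : (g2' * f * g1')%g = ((g2' * g2^-1) * (g2 * f * g1) * (g1^-1 * g1'))%g.
  by rewrite !mulgA mulgKV -!mulgA mulKVg.
by rewrite (delta_mulr hT_reg _ right_GL) (delta_mull hT_reg _ left_GL).
Qed.
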